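(* Let $Y\subset\mathbb{R}^n$ be open, and let $\omega\colon Y\to\mathbb{R}^n$, $f\colon Y\to\mathbb{R}^n$, $F\colon Y\to\mathbb{R}$, $H\colon Y\to\mathbb{R}^{n\times m}$, $g\colon Y\to\mathbb{R}^m$, $f^{\mathrm{num}}\colon Y\times Y\to\mathbb{R}^n$, $H^{\mathrm{num}}\colon Y\times Y\to\mathbb{R}^{n\times m}$ be arbitrary with $f^{\mathrm{num}}(u,u)=f(u)$ and $H^{\mathrm{num}}(u,u)=H(u)$. Then the following are equivalent: (A) there exists $F^{\mathrm{num}}\colon Y\times Y\to\mathbb{R}$ with $F^{\mathrm{num}}(u,u)=F(u)$ such that for all $u_-,u_0,u_+\in Y$, $$\omega(u_0)\cdot\Big(f^{\mathrm{num}}(u_0,u_+)-f^{\mathrm{num}}(u_-,u_0)+\tfrac12H^{\mathrm{num}}(u_0,u_+)\big(g(u_+)-g(u_0)\big)+\tfrac12H^{\mathrm{num}}(u_-,u_0)\big(g(u_0)-g(u_-)\big)\Big)\ \ge\ F^{\mathrm{num}}(u_0,u_+)-F^{\mathrm{num}}(u_-,u_0);$$ (B) for all $u_-,u_+\in Y$, $$[\![\omega]\!]\cdot f^{\mathrm{num}}(u_-,u_+)-\{\{\omega\}\}\cdot H^{\mathrm{num}}(u_-,u_+)\,[\![g]\!]\ \le\ [\![\omega\cdot f-F]\!].$$ Moreover, there exists a consistent $F^{\mathrm{num}}$ with equality in (A) for all triples iff (B) holds with equality for all pairs, and then $$F^{\mathrm{num}}=\{\{F\}\}+\{\{\omega\}\}\cdot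 f^{\mathrm{num}}-\{\{\omega\cdot f\}\}-\tfrac14[\![\omega]\!]\cdot H^{\mathrm{num}}[\![g]\!].$$
   Context: For a function $a$ on $Y$ and states $u_\pm$: $\{\{a\}\}=\tfrac12(a(u_-)+a(u_+))$, $[\![a]\!]=a(u_+)-a(u_-)$; numerical fluxes are evaluated at $(u_-,u_+)$. *)

From HB Require Import structures.
From mathcomp Require Import all_boot all_order all_algebra.
From mathcomp Require Import all_classical all_reals all_analysis.
Set Implicit Arguments. Unset Strict Implicit. Unset Printing Implicit Defensive.
Import Order.TTheory GRing.Theory Num.Theory.
Import numFieldNormedType.Exports.
Local Open Scope ring_scope.

Definition dotv {R : realType} {n : nat} (a b : 'cV[R]_n) : R :=
  \sum_(i < n) a i 0 * b i 0.

Definition lhsA {R : realType} {n m : nat}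
  (omega : 'cV[R]_n -> 'cV[R]_n) (g : 'cV[R]_n -> 'cV[R]_m)
  (fnum : 'cV[R]_n -> 'cV[R]_n -> 'cV[R]_n)
  (Hnum : 'cV[R]_n -> 'cV[R]_n -> 'M[R]_(n, m))
  (um u0 up : 'cV[R]_n) : R :=
  dotv (omega u0)
    (fnum u0 up - fnum um u0
     + 2^-1 *: (Hnum u0 up *m (g up - g u0))
     + 2^-1 *: (Hnum um u0 *m (g u0 - g um))).

Definition lhsB {R : realType} {n m : nat}
  (omega : 'cV[R]_n -> 'cV[R]_n) (g : 'cV[R]_n -> 'cV[R]_m)
  (fnum : 'cV[R]_n -> 'cV[R]_n -> 'cV[R]_n)
  (Hnum : 'cV[R]_n -> 'cV[R]_n -> 'M[R]_(n, m))
  (um up : 'cV[R]_n) : R :=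
  dotv (omega up - omega um) (fnum um up)
  - dotv (2^-1 *: (omega um + omega up)) (Hnum um up *m (g up - g um)).

Definition rhsB {R : realType} {n : nat}
  (omega f : 'cV[R]_n -> 'cV[R]_n) (F : 'cV[R]_n -> R) (um up : 'cV[R]_n) : R :=
  (dotv (omega up) (f up) - F up) - (dotv (omega um) (f um) - F um).

Definition Fnum_formula {R : realType} {n m : nat}
  (omega f : 'cV[R]_n -> 'cV[R]_n) (F : 'cV[R]_n -> R)
  (g : 'cV[R]_n -> 'cV[R]_m)
  (fnum : 'cV[R]_n -> 'cV[R]_n -> 'cV[R]_n)
  (Hnum : 'cV[R]_n -> 'cV[R]_n -> 'M[R]_(n, m))
  (um up : 'cV[R]_n) : R :=
  2^-1 * (F um + F up)
  + dotv (2^-1 *: (omega um + omega up)) (fnum um up)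
  - 2^-1 * (dotv (omega um) (f um) + dotv (omega up) (f up))
  - 4^-1 * dotv (omega up - omega um) (Hnum um up *m (g up - g um)).

From HB Require Import structures.
From mathcomp Require Import all_boot all_order all_algebra.
From mathcomp Require Import all_classical all_reals all_analysis.
From mathcomp Require Import ring lra.
Set Implicit Arguments. Unset Strict Implicit. Unset Printing Implicit Defensive.
Import Order.TTheory GRing.Theory Num.Theory.
Import numFieldNormedType.Exports.
Local Open Scope ring_scope.
Local Open Scope classical_set_scope.

(* Both (A) and (B) only involve the two one-sided fluxes [fluxL u_- u_+] and
   [fluxR u_- u_+], which agree with [omega u . f u] on the diagonal: the left
   side of (A) is [fluxL u0 up - fluxR um u0] and that of (B) is
   [fluxR um up - fluxL um up]. Evaluating (A) at the degenerate triples
   (u_-, u_-, u_+) and (u_-, u_+, u_+) and adding gives (B); conversely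
   [Fnum a b := fluxL a b - omega a . f a + F a] turns (B) into (A). The same
   two triples pin down [Fnum] in the equality case. *)

Section DotProduct.
Variables (R : realType) (n : nat).
Implicit Types a b c : 'cV[R]_n.

Lemma dotvDl a b c : dotv (a + b) c = dotv a c + dotv b c.
Proof. by rewrite /dotv -big_split; apply: eq_bigr => i _; rewrite mxE mulrDl. Qed.

Lemma dotvDr a b c : dotv a (b + c) = dotv a b + dotv a c.
Proof. by rewrite /dotv -big_split; apply: eq_bigr => i _; rewrite mxE mulrDr. Qed.

Lemma dotvNl a c : dotv (- a) c = - dotv a c.
Proof. by rewrite /dotv -sumrN; apply: eq_bigr => i _; rewrite mxE mulNr. Qed.

Lemma dotvNr a c : dotv a (- c) = - dotv a c.
Proof. by rewrite /dotv -sumrN; apply: eq_bigr => i _; rewrite mxE mulrN. Qed.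

Lemma dotvZl k a c : dotv (k *: a) c = k * dotv a c.
Proof. by rewrite /dotv mulr_sumr; apply: eq_bigr => i _; rewrite mxE mulrA. Qed.

Lemma dotvZr k a c : dotv a (k *: c) = k * dotv a c.
Proof. by rewrite /dotv mulr_sumr; apply: eq_bigr => i _; rewrite mxE mulrCA. Qed.

Lemma dotv0r a : dotv a 0 = 0.
Proof. by rewrite /dotv big1 // => i _; rewrite mxE mulr0. Qed.

End DotProduct.

Section TelescopingFlux.
Variables (T : Type) (R : realFieldType) (Y : set T).
Variables (P Q : T -> T -> R) (e F : T -> R).
Hypotheses (P_diag : forall u, Y u -> P u u = e u)
           (Q_diag : forall u, Y u -> Q u u = e u).

Definition consistent_flux (Fn : T -> T -> R) := forall u, Y u -> Fn u u = F u.

Lemma telescoping_flux_le_iff :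
  (exists Fn, consistent_flux Fn /\
     forall um u0 up, Y um -> Y u0 -> Y up ->
       Fn u0 up - Fn um u0 <= P u0 up - Q um u0)
  <-> (forall a b, Y a -> Y b -> Q a b - P a b <= (e b - F b) - (e a - F a)).
Proof.
split=> [[Fn [Fn_diag Fn_le]] a b Ya Yb | hB].
  have := Fn_le a a b Ya Ya Yb; have := Fn_le a b b Ya Yb Yb.
  by rewrite !Fn_diag ?P_diag ?Q_diag //; lra.
exists (fun a b => P a b - e a + F a); split=> [u Yu | um u0 up Ym Y0 _].
  by rewrite P_diag // subrr add0r.
by have := hB um u0 Ym Y0; lra.
Qed.

Lemma telescoping_flux_eq_iff :
  (exists Fn, consistent_flux Fn /\
     forall um u0 up, Y um -> Y u0 -> Y up ->
       P u0 up - Q um u0 = Fn u0 up - Fn um u0)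
  <-> (forall a b, Y a -> Y b -> Q a b - P a b = (e b - F b) - (e a - F a)).
Proof.
split=> [[Fn [Fn_diag Fn_eq]] a b Ya Yb | hB].
  have := Fn_eq a a b Ya Ya Yb; have := Fn_eq a b b Ya Yb Yb.
  by rewrite !Fn_diag ?P_diag ?Q_diag //; lra.
exists (fun a b => P a b - e a + F a); split=> [u Yu | um u0 up Ym Y0 _].
  by rewrite P_diag // subrr add0r.
by have := hB um u0 Ym Y0; lra.
Qed.

Lemma telescoping_flux_eq_unique Fn : consistent_flux Fn ->
  (forall um u0 up, Y um -> Y u0 -> Y up ->
     P u0 up - Q um u0 = Fn u0 up - Fn um u0) ->
  forall a b, Y a -> Y b ->
    Fn a b = 2^-1 * (F a + F b) + 2^-1 * (P a b + Q a b) - 2^-1 * (e a + e b).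
Proof.
move=> Fn_diag Fn_eq a b Ya Yb.
have := Fn_eq a a b Ya Ya Yb; have := Fn_eq a b b Ya Yb Yb.
by rewrite !Fn_diag ?P_diag ?Q_diag //; lra.
Qed.

End TelescopingFlux.

Section OneSidedFluxes.
Variables (R : realType) (n m : nat).
Variables (omega f : 'cV[R]_n -> 'cV[R]_n) (F : 'cV[R]_n -> R).
Variables (g : 'cV[R]_n -> 'cV[R]_m).
Variables (fnum : 'cV[R]_n -> 'cV[R]_n -> 'cV[R]_n).
Variables (Hnum : 'cV[R]_n -> 'cV[R]_n -> 'M[R]_(n, m)).

Definition fluxL a b :=
  dotv (omega a) (fnum a b) + 2^-1 * dotv (omega a) (Hnum a b *m (g b - g a)).

Definition fluxR a b :=
  dotv (omega b) (fnum a b) - 2^-1 * dotv (omega b) (Hnum a b *m (g b - g a)).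

Let dotv_simpl := (dotvDl, dotvDr, dotvNl, dotvNr, dotvZl, dotvZr).

Lemma lhsA_fluxE um u0 up :
  lhsA omega g fnum Hnum um u0 up = fluxL u0 up - fluxR um u0.
Proof. by rewrite /lhsA /fluxL /fluxR !dotv_simpl; ring. Qed.

Lemma lhsB_fluxE a b : lhsB omega g fnum Hnum a b = fluxR a b - fluxL a b.
Proof. by rewrite /lhsB /fluxL /fluxR !dotv_simpl; ring. Qed.

Lemma Fnum_formula_fluxE a b :
  Fnum_formula omega f F g fnum Hnum a b =
  2^-1 * (F a + F b) + 2^-1 * (fluxL a b + fluxR a b)
  - 2^-1 * (dotv (omega a) (f a) + dotv (omega b) (f b)).
Proof. by rewrite /Fnum_formula /fluxL /fluxR !dotv_simpl; field. Qed.

Lemma fluxL_diag u : fnum u u = f u -> fluxL u u = dotv (omega u) (f u).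
Proof. by rewrite /fluxL => ->; rewrite subrr mulmx0 dotv0r mulr0 addr0. Qed.

Lemma fluxR_diag u : fnum u u = f u -> fluxR u u = dotv (omega u) (f u).
Proof. by rewrite /fluxR => ->; rewrite subrr mulmx0 dotv0r mulr0 subr0. Qed.

End OneSidedFluxes.

Theorem mainTheorem6 (R : realType) (n m : nat) (Y : set 'cV[R]_n) (hY : open Y)
  (omega f : 'cV[R]_n -> 'cV[R]_n) (F : 'cV[R]_n -> R)
  (H : 'cV[R]_n -> 'M[R]_(n, m)) (g : 'cV[R]_n -> 'cV[R]_m)
  (fnum : 'cV[R]_n -> 'cV[R]_n -> 'cV[R]_n)
  (Hnum : 'cV[R]_n -> 'cV[R]_n -> 'M[R]_(n, m))
  (hf : forall u, Y u -> fnum u u = f u)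
  (hH : forall u, Y u -> Hnum u u = H u) :
  ((exists Fnum : 'cV[R]_n -> 'cV[R]_n -> R,
      (forall u, Y u -> Fnum u u = F u) /\
      (forall um u0 up, Y um -> Y u0 -> Y up ->
         Fnum u0 up - Fnum um u0 <= lhsA omega g fnum Hnum um u0 up))
   <->
   (forall um up, Y um -> Y up ->
      lhsB omega g fnum Hnum um up <= rhsB omega f F um up))
  /\
  ((exists Fnum : 'cV[R]_n -> 'cV[R]_n -> R,
      (forall u, Y u -> Fnum u u = F u) /\
      (forall um u0 up, Y um -> Y u0 -> Y up ->
         lhsA omega g fnum Hnum um u0 up = Fnum u0 up - Fnum um u0))
   <->
   (forall um up, Y um -> Y up ->
      lhsB omega g fnum Hnum um up = rhsB omega f F um up))
  /\
  (forall Fnum : 'cV[R]_n -> 'cV[R]_n -> R,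
      (forall u, Y u -> Fnum u u = F u) ->
      (forall um u0 up, Y um -> Y u0 -> Y up ->
         lhsA omega g fnum Hnum um u0 up = Fnum u0 up - Fnum um u0) ->
      forall um up, Y um -> Y up ->
        Fnum um up = Fnum_formula omega f F g fnum Hnum um up).
Proof.
have lhsAE : lhsA omega g fnum Hnum =
    fun um u0 up => fluxL omega g fnum Hnum u0 up - fluxR omega g fnum Hnum um u0.
  by apply/funext => um; apply/funext => u0; apply/funext => up; apply: lhsA_fluxE.
have lhsBE : lhsB omega g fnum Hnum =
    fun a b => fluxR omega g fnum Hnum a b - fluxL omega g fnum Hnum a b.
  by apply/funext => a; apply/funext => b; apply: lhsB_fluxE.
have L_diag u : Y u -> fluxL omega g fnum Hnum u u = dotv (omega u) (f u).
  by move=> Yu; apply/fluxL_diag/hf.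
have R_diag u : Y u -> fluxR omega g fnum Hnum u u = dotv (omega u) (f u).
  by move=> Yu; apply/fluxR_diag/hf.
rewrite lhsAE lhsBE; split; [|split].
- exact: (telescoping_flux_le_iff F L_diag R_diag).
- exact: (telescoping_flux_eq_iff F L_diag R_diag).
- move=> Fn Fn_diag Fn_eq a b Ya Yb; rewrite Fnum_formula_fluxE.
  exact: (@telescoping_flux_eq_unique _ _ Y _ _ (fun u => dotv (omega u) (f u))
            F L_diag R_diag Fn Fn_diag Fn_eq).
Qed.
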